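(* Let $\mu$ be a Borel probability measure on $\mathbb{R}^n$ which is spectral with spectrum $\Lambda$, let $(U_\Lambda(a))_{a\in\mathbb{R}^n}$ be the group of local translations on $L^2(\mu)$, and let $W:L^2(\mu)\to L^2(G,\mu_{Bohr})$ be the isometry determined by $We_\lambda=\tilde e_\lambda$ for $\lambda\in\Lambda$. Then $\mathcal{U}_{Bohr}(a)W=WU_\Lambda(a)$ for all $a\in\mathbb{R}^n$.
   Context: $e_\lambda(x)=e^{2\pi i\lambda\cdot x}$. $\mu$ is spectral with spectrum $\Lambda$ if $\{e_\lambda\}_{\lambda\in\Lambda}$ is an orthogonal (hence orthonormal) basis of $L^2(\mu)$. The local translations are $U_\Lambda(a)f=\sum_{\lambda\in\Lambda}e^{2\pi ia\cdot\lambda}\langle f,e_\lambda\rangle e_\lambda$, where $\langle f,g\rangle=\int f\overline g\,d\mu$. The Bohr compactification $G$ is the set of all group homomorphisms $\chi:\mathbb{R}^n\to\mathbb{T}$ with pointwise multiplication and the topology of pointwise convergence, a compact abelian group with normalized Haar measure $\mu_{Bohr}$; $\tilde e_\lambda(\chi)=\chi(\lambda)$. For $a\in\mathbb{R}^n$, $(a\cdot\chi)(x)=e^{2\pi ia\cdot x}\chi(x)$ and $(\mathcal{U}_{Bohr}(a)f)(\chi)=f(a\cdot\chi)$ for $f\in L^2(G,\mu_{Bohr})$. *)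

From HB Require Import structures.
From mathcomp Require Import all_boot all_order all_algebra.
From mathcomp Require Import all_classical all_reals all_analysis.
From mathcomp Require Import complex.
From mathcomp Require Import ring lra.

Set Implicit Arguments.
Unset Strict Implicit.
Unset Printing Implicit Defensive.

Import Order.TTheory GRing.Theory Num.Theory.
Local Open Scope ring_scope.
Local Open Scope classical_set_scope.

Section Defs.
Variable R : realType.

(* R^n is modelled as n.-tuple R, with its product (= Borel) sigma-algebra. *)

Definition dotp n (a x : n.-tuple R) : R := \sum_(i < n) tnth a i * tnth x i.
Definition vadd n (x y : n.-tuple R) : n.-tuple R :=
  [tuple tnth x i + tnth y i | i < n].

Definition expi (t : R) : R[i] := (cos t +i* sin t)%C.

Definition echar n (l : n.-tuple R) (x : n.-tuple R) : R[i] :=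
  expi (2 * pi * dotp l x).

Definition cre (z : R[i]) : R := complex.Re z.
Definition cim (z : R[i]) : R := complex.Im z.

Definition csq (z : R[i]) : R := cre z ^+ 2 + cim z ^+ 2.

Definition is_char n (chi : n.-tuple R -> R[i]) : Prop :=
  (forall x y, chi (vadd x y) = chi x * chi y) /\ (forall x, csq (chi x) = 1).

Lemma is_char1 n : is_char (fun _ : n.-tuple R => 1).
Proof. by split => [x y|x]; rewrite ?mulr1 // /csq /= expr1n expr0n /= addr0. Qed.

Lemma csqM (z w : R[i]) : csq (z * w) = csq z * csq w.
Proof. by case: z w => a b [c d]; rewrite /csq /=; ring. Qed.

Lemma is_charM n (chi psi : n.-tuple R -> R[i]) :
  is_char chi -> is_char psi -> is_char (fun x => chi x * psi x).
Proof.
move=> [c1 c2] [p1 p2]; split => [x y|x]; last by rewrite csqM c2 p2 mulr1.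
by rewrite c1 p1; ring.
Qed.

Lemma dotpD n (a x y : n.-tuple R) : dotp a (vadd x y) = dotp a x + dotp a y.
Proof.
rewrite /dotp -big_split /=; apply: eq_bigr => i _.
by rewrite tnth_mktuple mulrDr.
Qed.

Lemma expiD (s t : R) : expi (s + t) = expi s * expi t.
Proof. by rewrite /expi cosD sinD /=; congr (_ +i* _)%C; ring. Qed.

Lemma is_char_echar n (a : n.-tuple R) : is_char (echar a).
Proof.
split => [x y|x]; first by rewrite /echar dotpD mulrDr expiD.
by rewrite /csq /echar /expi /= cos2Dsin2.
Qed.

(* The Bohr compactification: all homomorphisms R^n -> T. *)
Record bohr n := Bohr { bval : n.-tuple R -> R[i] ; bvalP : is_char bval }.

HB.instance Definition _ n := gen_eqMixin (bohr n).
HB.instance Definition _ n := gen_choiceMixin (bohr n).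
HB.instance Definition _ n :=
  isPointed.Build (bohr n) (@Bohr n (fun _ => 1) (@is_char1 n)).

(* sigma-algebra on G generated by the evaluations chi |-> chi(x),
   i.e. the Baire sigma-algebra of the topology of pointwise convergence *)
Definition bohr_gen n : set (set (bohr n)) :=
  [set A | exists (x : n.-tuple R) (B : set R), measurable B /\
     (A = [set chi | B (cre (bval chi x))] \/ A = [set chi | B (cim (bval chi x))])].

Definition bohr_measurable n := <<s (@bohr_gen n) >>.

Lemma bohr_measurable0 n : @bohr_measurable n set0.
Proof. exact: sigma_algebra0. Qed.
Lemma bohr_measurableC n (A : set (bohr n)) :
  @bohr_measurable n A -> @bohr_measurable n (~` A).
Proof. by move=> h; rewrite -setTD; apply: sigma_algebraCD. Qed.
Lemma bohr_measurable_bigcup n (F : (set (bohr n))^nat) :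
  (forall i, @bohr_measurable n (F i)) -> @bohr_measurable n (\bigcup_i F i).
Proof. exact: sigma_algebra_bigcup. Qed.

HB.instance Definition _ n := @isMeasurable.Build default_measure_display
  (bohr n) (@bohr_measurable n) (@bohr_measurable0 n) (@bohr_measurableC n)
  (@bohr_measurable_bigcup n).

Definition bohr_mul n (psi chi : bohr n) : bohr n :=
  @Bohr n (fun x => bval psi x * bval chi x)
    (is_charM (bvalP psi) (bvalP chi)).

Definition bohr_shift n (a : n.-tuple R) (chi : bohr n) : bohr n :=
  @Bohr n (fun x => echar a x * bval chi x)
    (is_charM (is_char_echar a) (bvalP chi)).

Definition etilde n (l : n.-tuple R) (chi : bohr n) : R[i] := bval chi l.

Definition U_bohr n (a : n.-tuple R) (F : bohr n -> R[i]) : bohr n -> R[i] :=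
  fun chi => F (bohr_shift a chi).

Definition is_haar n (mub : probability (bohr n) R) : Prop :=
  forall (psi : bohr n) (A : set (bohr n)), measurable A ->
    mub ((bohr_mul psi) @^-1` A) = mub A.

Section L2.
Context d (T : measurableType d) (mu : {measure set T -> \bar R}).

Definition cmeasurable (f : T -> R[i]) : Prop :=
  measurable_fun setT (fun x => cre (f x)) /\ measurable_fun setT (fun x => cim (f x)).

Definition L2 (f : T -> R[i]) : Prop :=
  cmeasurable f /\ (\int[mu]_x (csq (f x))%:E < +oo)%E.

Definition cintegral (f : T -> R[i]) : R[i] :=
  (Rintegral mu setT (fun x => cre (f x)) +i* Rintegral mu setT (fun x => cim (f x)))%C.

Definition inner (f g : T -> R[i]) : R[i] := cintegral (fun x => f x * conjc (g x)).

Definition l2norm (f : T -> R[i]) : R := Num.sqrt (Rintegral mu setT (fun x => csq (f x))).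

End L2.

Section Spectral.
Variables (n : nat) (mu : {measure set (n.-tuple R) -> \bar R}).

Definition lincomb (s : seq (n.-tuple R * R[i])) (x : n.-tuple R) : R[i] :=
  \sum_(p <- s) p.2 * echar p.1 x.

(* {e_lambda}_{lambda in Lam} is an orthonormal basis of L^2(mu):
   orthonormal and with dense linear span *)
Definition spectral (Lam : set (n.-tuple R)) : Prop :=
  (forall l l', Lam l -> Lam l' ->
     inner mu (echar l) (echar l') = (if l == l' then 1 else 0)) /\
  (forall f, L2 mu f -> forall eps : R, 0 < eps ->
     exists s : seq (n.-tuple R * R[i]), (forall p, p \in s -> Lam p.1) /\
       l2norm mu (fun x => f x - lincomb s x) < eps).

(* g = U_Lam(a) f = sum_{lambda in Lam} e^{2 pi i a.lambda} <f, e_lambda> e_lambda,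
   the (unordered) sum converging in L^2(mu) *)
Definition is_local_transl (Lam : set (n.-tuple R)) (a : n.-tuple R)
    (f g : n.-tuple R -> R[i]) : Prop :=
  L2 mu g /\
  forall eps : R, 0 < eps ->
    exists s0 : seq (n.-tuple R), (forall l, l \in s0 -> Lam l) /\
      forall s : seq (n.-tuple R), uniq s -> (forall l, l \in s -> Lam l) ->
        {subset s0 <= s} ->
        l2norm mu (fun x => g x -
          \sum_(l <- s) echar a l * inner mu f (echar l) * echar l x) < eps.

End Spectral.

Definition is_W n (mu : {measure set (n.-tuple R) -> \bar R})
    (mub : {measure set (bohr n) -> \bar R}) (Lam : set (n.-tuple R))
    (W : (n.-tuple R -> R[i]) -> (bohr n -> R[i])) : Prop :=
  [/\ forall f, L2 mu f -> L2 mub (W f),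
      forall f g, L2 mu f -> L2 mu g -> (f = g %[ae mu]) -> (W f = W g %[ae mub]),
      forall f g (c : R[i]), L2 mu f -> L2 mu g ->
        W (fun x => f x + c * g x) = (fun chi => W f chi + c * W g chi) %[ae mub],
      forall f, L2 mu f -> l2norm mub (W f) = l2norm mu f
    & forall l, Lam l -> W (echar l) = etilde l %[ae mub]].

End Defs.

(* Both sides lie in L^2(mu_Bohr), so it suffices that the norm of their
   difference D be arbitrarily small. By spectrality f is close to a finite
   combination T = sum c_l e_l with l in Lam, and by definition of U_Lam(a) the
   function g is close to G = sum e_l(a) <f, e_l> e_l on a common finite
   support. For finite combinations the identity is exact, since
   etilde_l (a . chi) = e_l(a) etilde_l(chi). So D splits into four pieces:
   two are controlled by |f - T| (Haar invariance and the isometry W), one by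
   |g - G|, and the last compares sum e_l(a) c_l e_l with G, which Bessel's
   inequality bounds by |f - T| again. *)

From HB Require Import structures.
From mathcomp Require Import all_boot all_order all_algebra.
From mathcomp Require Import all_classical all_reals all_analysis.
From mathcomp Require Import complex.
From mathcomp Require Import ring lra measurable_realfun.

Set Implicit Arguments.
Unset Strict Implicit.
Unset Printing Implicit Defensive.
Import Order.TTheory GRing.Theory Num.Theory.
Local Open Scope ring_scope.
Local Open Scope classical_set_scope.

Section ComplexArith.
Variable R : realType.
Implicit Types u v w z : R[i].

Lemma eq_complex u v : cre u = cre v -> cim u = cim v -> u = v.
Proof. by case: u v => ? ? [? ?] /= -> ->. Qed.

Lemma csq_ge0 z : 0 <= csq z.
Proof. by rewrite /csq addr_ge0 // sqr_ge0. Qed.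

Lemma csqN z : csq (- z) = csq z.
Proof. by case: z => a b; rewrite /csq /=; ring. Qed.

Lemma csqD_le u v : csq (u + v) <= 2 * csq u + 2 * csq v.
Proof.
case: u v => a b [c e]; rewrite /csq /cre /cim /=.
have := sqr_ge0 (a - c); have := sqr_ge0 (b - e); nra.
Qed.

Lemma csqD4_le u v w z :
  csq (u + v + w + z) <= 8 * (csq u + csq v + csq w + csq z).
Proof.
have := csqD_le (u + v + w) z; have := csqD_le (u + v) w; have := csqD_le u v.
have := csq_ge0 u; have := csq_ge0 v; have := csq_ge0 w; have := csq_ge0 z.
lra.
Qed.

Lemma creD u v : cre (u + v) = cre u + cre v.
Proof. by case: u v => ? ? [? ?]. Qed.

Lemma cre_sum (I : Type) (s : seq I) (F : I -> R[i]) :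
  cre (\sum_(i <- s) F i) = \sum_(i <- s) cre (F i).
Proof. by elim: s => [|i s IH]; rewrite ?big_nil ?big_cons ?creD ?IH. Qed.

Lemma cre_mulJ u v : cre (u * conjc v) = cre u * cre v + cim u * cim v.
Proof. by case: u v => a b [c e]; rewrite /cre /cim /=; ring. Qed.

Lemma cim_mulJ u v : cim (u * conjc v) = cim u * cre v - cre u * cim v.
Proof. by case: u v => a b [c e]; rewrite /cre /cim /=; ring. Qed.

Lemma normr_cre_mulJ_le u v : `|cre (u * conjc v)| <= csq u + csq v.
Proof.
rewrite cre_mulJ /csq ler_norml; case: u v => a b [c e]; rewrite /cre /cim /=.
have := sqr_ge0 (a + c); have := sqr_ge0 (a - c).
have := sqr_ge0 (b + e); have := sqr_ge0 (b - e).
have := sqr_ge0 a; have := sqr_ge0 b; have := sqr_ge0 c; have := sqr_ge0 e.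
move=> *; apply/andP; split; nra.
Qed.

Lemma normr_cim_mulJ_le u v : `|cim (u * conjc v)| <= csq u + csq v.
Proof.
rewrite cim_mulJ /csq ler_norml; case: u v => a b [c e]; rewrite /cre /cim /=.
have := sqr_ge0 (b + c); have := sqr_ge0 (b - c).
have := sqr_ge0 (a + e); have := sqr_ge0 (a - e).
have := sqr_ge0 a; have := sqr_ge0 b; have := sqr_ge0 c; have := sqr_ge0 e.
move=> *; apply/andP; split; nra.
Qed.

Lemma csq_echar n (l x : n.-tuple R) : csq (echar l x) = 1.
Proof. exact: (proj2 (is_char_echar l)). Qed.

End ComplexArith.

Section L2Space.
Context (R : realType) d (T : measurableType d) (mu : {measure set T -> \bar R}).
Implicit Types (f g h k : T -> R[i]) (c : R[i]).

Local Notation integrableR h := (mu.-integrable setT (EFin \o h)).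

Definition sqnorm f : R := Rintegral mu setT (fun x => csq (f x)).

Lemma sqnorm_ge0 f : 0 <= sqnorm f.
Proof. by apply: Rintegral_ge0 => x _; exact: csq_ge0. Qed.

Lemma sqnorm0 : sqnorm (fun _ => 0) = 0.
Proof.
rewrite /sqnorm (_ : (fun _ => _) = cst 0) ?Rintegral_cst ?mul0r //.
by apply/funext => x; rewrite /csq /= expr0n /= addr0.
Qed.

Lemma sqnormN f : sqnorm (fun x => - f x) = sqnorm f.
Proof. by rewrite /sqnorm; under eq_fun do rewrite csqN. Qed.

Lemma sqnorm_subC f g : sqnorm (fun x => f x - g x) = sqnorm (fun x => g x - f x).
Proof. by rewrite -sqnormN; under eq_fun do rewrite opprB. Qed.

Lemma l2normE f : l2norm mu f = Num.sqrt (sqnorm f).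
Proof. by []. Qed.

Lemma sqnorm_lt_of_l2norm f (e : R) : 0 < e ->
  l2norm mu f < Num.sqrt e -> sqnorm f < e.
Proof. by move=> e0; rewrite l2normE ltr_sqrt. Qed.

Lemma cmeasurable_addM f g c :
  cmeasurable f -> cmeasurable g -> cmeasurable (fun x => f x + c * g x).
Proof.
case: c => c1 c2 [f1 f2] [g1 g2]; split.
- rewrite (_ : (fun x => _) =
    (fun x => cre (f x) + (c1 * cre (g x) - c2 * cim (g x)))); last first.
    by apply/funext => x; case: (f x) => ? ?; case: (g x).
  by apply: measurable_funD => //; apply: measurable_funB; apply: measurable_funM.
- rewrite (_ : (fun x => _) =
    (fun x => cim (f x) + (c1 * cim (g x) + c2 * cre (g x)))); last first.
    by apply/funext => x; case: (f x) => ? ?; case: (g x) => ? ? /=; rewrite /cim /=; ring.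
  by apply: measurable_funD => //; apply: measurable_funD; apply: measurable_funM.
Qed.

Lemma measurable_EFin_csq f : cmeasurable f ->
  measurable_fun setT (EFin \o (fun x => csq (f x))).
Proof.
by case=> f1 f2; apply/measurable_EFinP/measurable_funD; exact: measurable_funX.
Qed.

Lemma L2_addM f g c : L2 mu f -> L2 mu g -> L2 mu (fun x => f x + c * g x).
Proof.
move=> [mf If] [mg Ig]; split; first exact: cmeasurable_addM.
have mf' := measurable_EFin_csq mf; have mg' := measurable_EFin_csq mg.
have csq0 x : (0 <= (csq x)%:E)%E by rewrite lee_fin csq_ge0.
apply: (@le_lt_trans _ _
  (\int[mu]_x (2%:E * (csq (f x))%:E + (2 * csq c)%:E * (csq (g x))%:E))%E).
  apply: ge0_le_integral => //.
  - exact/measurable_EFin_csq/cmeasurable_addM.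
  - by apply: emeasurable_funD; exact: emeasurable_funM.
  - by move=> x _; rewrite -!EFinM -EFinD lee_fin -mulrA -csqM csqD_le.
rewrite ge0_integralD //; last 4 first.
- by move=> x _; rewrite mule_ge0.
- exact: emeasurable_funM.
- by move=> x _; rewrite mule_ge0 // lee_fin mulr_ge0 // csq_ge0.
- exact: emeasurable_funM.
rewrite !ge0_integralZl // ?lee_fin ?mulr_ge0 ?csq_ge0 //.
by apply: lte_add_pinfty; apply: lte_mul_pinfty; rewrite ?lee_fin ?mulr_ge0 ?csq_ge0.
Qed.

Lemma L2_sub f g : L2 mu f -> L2 mu g -> L2 mu (fun x => f x - g x).
Proof.
move=> hf hg; rewrite (_ : (fun x => _) = (fun x => f x + -1 * g x)).
  exact: L2_addM.
by apply/funext => x; rewrite mulN1r.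
Qed.

Lemma L2_0 : L2 mu (fun _ => 0).
Proof.
split; first by split; exact: measurable_cst.
rewrite (eq_integral (fun _ => 0%E)) ?integral0 // => x _.
by rewrite /csq /= expr0n /= addr0.
Qed.

Lemma integrable_csq f : L2 mu f -> integrableR (fun x => csq (f x)).
Proof.
move=> [mf If]; apply/integrableP; split; first exact: measurable_EFin_csq.
rewrite (eq_integral (fun x => (csq (f x))%:E)) // => x _.
by rewrite /comp abse_EFin ger0_norm // csq_ge0.
Qed.

Lemma integral_csq f : L2 mu f -> (\int[mu]_x (csq (f x))%:E)%E = (sqnorm f)%:E.
Proof.
move=> hf; rewrite /sqnorm /Rintegral fineK // ge0_fin_numE ?(proj2 hf) //.
by apply: integral_ge0 => x _; rewrite lee_fin csq_ge0.
Qed.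

Lemma eq_sqnorm_ae f g : cmeasurable f -> cmeasurable g ->
  f = g %[ae mu] -> sqnorm f = sqnorm g.
Proof.
move=> mf mg fg; rewrite /sqnorm /Rintegral; congr fine.
apply: ae_eq_integral => //; try exact: measurable_EFin_csq.
by apply: filterS fg => x fgx Tx; rewrite /= fgx.
Qed.

Lemma sqnorm_eq0_ae f : L2 mu f -> sqnorm f = 0 -> f = (fun _ => 0) %[ae mu].
Proof.
move=> hf f0.
have : (\int[mu]_(x in setT) `|(csq (f x))%:E| = 0)%E.
  rewrite -[RHS]/(0%:E) -f0 -integral_csq //; apply: eq_integral => x _.
  by rewrite abse_EFin ger0_norm // csq_ge0.
move/(ae_eq_integral_abs mu measurableT (measurable_EFin_csq (proj1 hf))).
apply: filterS => x fx Tx; have [] := fx Tx.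
case: (f x) => a b; rewrite /csq /= => /eqP.
by rewrite paddr_eq0 ?sqr_ge0 // !sqrf_eq0 => /andP[/eqP -> /eqP ->].
Qed.

Lemma integrableR_D (u v : T -> R) :
  integrableR u -> integrableR v -> integrableR (fun x => u x + v x).
Proof.
move=> iu iv; rewrite (_ : _ \o _ = (EFin \o u) \+ (EFin \o v))%E.
  exact: integrableD.
by apply/funext => x; rewrite /= EFinD.
Qed.

Lemma integrableR_Zl (r : R) (u : T -> R) :
  integrableR u -> integrableR (fun x => r * u x).
Proof.
move=> iu; rewrite (_ : _ \o _ = (fun x => r%:E * (EFin \o u) x))%E.
  exact: integrableZl.
by apply/funext => x; rewrite /= EFinM.
Qed.

Lemma sqnormD4_le f g h k : L2 mu f -> L2 mu g -> L2 mu h -> L2 mu k ->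
  sqnorm (fun x => f x + g x + h x + k x) <=
  8 * (sqnorm f + sqnorm g + sqnorm h + sqnorm k).
Proof.
move=> hf hg hh hk.
have L2D u v : L2 mu u -> L2 mu v -> L2 mu (fun x => u x + v x).
  move=> hu hv; rewrite (_ : (fun x => _) = (fun x => u x + 1 * v x)).
    exact: L2_addM.
  by apply/funext => x; rewrite mul1r.
have if_ := integrable_csq hf; have ig := integrable_csq hg.
have ih := integrable_csq hh; have ik := integrable_csq hk.
have ifg := integrableR_D if_ ig; have ifgh := integrableR_D ifg ih.
rewrite /sqnorm -(RintegralD measurableT if_ ig) -(RintegralD measurableT ifg ih).
rewrite -(RintegralD measurableT ifgh ik).
set S := fun x => csq (f x) + csq (g x) + csq (h x) + csq (k x).
have iS : integrableR S := integrableR_D ifgh ik.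
rewrite -(@RintegralZl _ _ _ mu setT S) //.
apply: le_Rintegral => //.
- by apply/integrable_csq/L2D => //; apply/L2D => //; exact/L2D.
- exact: integrableR_Zl.
- by move=> x _; exact: csqD4_le.
Qed.

End L2Space.

Section InnerProduct.
Context (R : realType) d (T : measurableType d) (mu : {measure set T -> \bar R}).
Implicit Types (f g h k : T -> R[i]) (c : R[i]).

Local Notation integrableR h := (mu.-integrable setT (EFin \o h)).

Lemma integrable_dominated_csq f g (u : T -> R) : L2 mu f -> L2 mu g ->
  measurable_fun setT u -> (forall x, `|u x| <= csq (f x) + csq (g x)) ->
  integrableR u.
Proof.
move=> hf hg mu_ ub.
apply: (le_integrable measurableT _ _
  (integrableR_D (integrable_csq hf) (integrable_csq hg))).
- exact/measurable_EFinP.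
- move=> x _; rewrite /comp !abse_EFin lee_fin (le_trans (ub x)) //.
  by rewrite ger0_norm // addr_ge0 // csq_ge0.
Qed.

Lemma integrable_cre_mulJ f g : L2 mu f -> L2 mu g ->
  integrableR (fun x => cre (f x * conjc (g x))).
Proof.
move=> hf hg; apply: (integrable_dominated_csq hf hg); last first.
  by move=> x; exact: normr_cre_mulJ_le.
under eq_fun do rewrite cre_mulJ.
case: hf => -[? ?] _; case: hg => -[? ?] _.
by apply: measurable_funD; apply: measurable_funM.
Qed.

Lemma integrable_cim_mulJ f g : L2 mu f -> L2 mu g ->
  integrableR (fun x => cim (f x * conjc (g x))).
Proof.
move=> hf hg; apply: (integrable_dominated_csq hf hg); last first.
  by move=> x; exact: normr_cim_mulJ_le.
under eq_fun do rewrite cim_mulJ.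
case: hf => -[? ?] _; case: hg => -[? ?] _.
by apply: measurable_funB; apply: measurable_funM.
Qed.

Lemma inner0l k : inner mu (fun _ => 0) k = 0.
Proof.
rewrite /inner (_ : (fun x => 0 * conjc (k x)) = fun=> 0).
  by rewrite /cintegral Rintegral_cst // mul0r.
by apply/funext => x; rewrite mul0r.
Qed.

Lemma innerDMl f g k c : L2 mu f -> L2 mu g -> L2 mu k ->
  inner mu (fun x => f x + c * g x) k = inner mu f k + c * inner mu g k.
Proof.
case: c => c1 c2 hf hg hk; rewrite /inner /cintegral.
have re_fk := integrable_cre_mulJ hf hk; have re_gk := integrable_cre_mulJ hg hk.
have im_fk := integrable_cim_mulJ hf hk; have im_gk := integrable_cim_mulJ hg hk.
have -> : (fun x => cre ((f x + (c1 +i* c2)%C * g x) * conjc (k x))) =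
  (fun x => cre (f x * conjc (k x)) +
    (c1 * cre (g x * conjc (k x)) + (- c2) * cim (g x * conjc (k x)))).
  apply/funext => x; case: (f x) => ? ?; case: (g x) => ? ?; case: (k x) => ? ?.
  by rewrite /cre /cim /=; ring.
have -> : (fun x => cim ((f x + (c1 +i* c2)%C * g x) * conjc (k x))) =
  (fun x => cim (f x * conjc (k x)) +
    (c1 * cim (g x * conjc (k x)) + c2 * cre (g x * conjc (k x)))).
  apply/funext => x; case: (f x) => ? ?; case: (g x) => ? ?; case: (k x) => ? ?.
  by rewrite /cre /cim /=; ring.
rewrite !RintegralD // ?RintegralZl //;
  try by [apply: integrableR_D; apply: integrableR_Zl | apply: integrableR_Zl].
by apply: eq_complex; rewrite /cre /cim /=; ring.
Qed.

Lemma inner_conjC f g : L2 mu f -> L2 mu g -> inner mu g f = conjc (inner mu f g).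
Proof.
move=> hf hg; rewrite /inner /cintegral.
have -> : (fun x => cre (g x * conjc (f x))) = (fun x => cre (f x * conjc (g x))).
  by apply/funext => x; rewrite !cre_mulJ; ring.
have -> : (fun x => cim (g x * conjc (f x))) = (fun x => (-1) * cim (f x * conjc (g x))).
  by apply/funext => x; rewrite !cim_mulJ; ring.
rewrite RintegralZl //; last exact: integrable_cim_mulJ.
by apply: eq_complex; rewrite /cre /cim /=; ring.
Qed.

Lemma innerDMr f g k c : L2 mu f -> L2 mu g -> L2 mu k ->
  inner mu k (fun x => f x + c * g x) = inner mu k f + conjc c * inner mu k g.
Proof.
move=> hf hg hk; rewrite inner_conjC //; last exact: L2_addM.
by rewrite innerDMl // (inner_conjC hf hk) (inner_conjC hg hk) rmorphD rmorphM.
Qed.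

Lemma inner_self f : L2 mu f -> inner mu f f = (sqnorm mu f)%:C%C.
Proof.
move=> hf; rewrite /inner /cintegral /sqnorm.
have -> : (fun x => cre (f x * conjc (f x))) = (fun x => csq (f x)).
  by apply/funext => x; rewrite cre_mulJ /csq; ring.
have -> : (fun x => cim (f x * conjc (f x))) = (fun x => 0).
  by apply/funext => x; rewrite cim_mulJ; ring.
by rewrite Rintegral_cst // mul0r.
Qed.

End InnerProduct.

Section FiniteCombinations.
Context (R : realType) d (T : measurableType d) (mu : {measure set T -> \bar R}).
Variables (I : eqType) (e : I -> T -> R[i]).
Hypothesis L2e : forall i, L2 mu (e i).
Implicit Types (h : T -> R[i]) (s : seq I) (c : I -> R[i]).

Definition comb s c x : R[i] := \sum_(i <- s) c i * e i x.

Definition orthonormal_on s := forall i j, i \in s -> j \in s ->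
  inner mu (e i) (e j) = if i == j then 1 else 0.

Lemma comb_nil c : comb [::] c = fun _ => 0.
Proof. by apply/funext => x; rewrite /comb big_nil. Qed.

Lemma comb_cons i s c : comb (i :: s) c = fun x => comb s c x + c i * e i x.
Proof. by apply/funext => x; rewrite /comb big_cons addrC. Qed.

Lemma comb_sub s c c' :
  (fun x => comb s c x - comb s c' x) = comb s (fun i => c i - c' i).
Proof. by apply/funext => x; rewrite /comb -sumrB; apply: eq_bigr => i _; ring. Qed.

Lemma L2_comb s c : L2 mu (comb s c).
Proof.
elim: s => [|i s IH]; first by rewrite comb_nil; exact: L2_0.
by rewrite comb_cons; exact: L2_addM.
Qed.

Lemma inner_combl s c h : L2 mu h ->
  inner mu (comb s c) h = \sum_(i <- s) c i * inner mu (e i) h.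
Proof.
move=> hh; elim: s => [|i s IH]; first by rewrite comb_nil inner0l big_nil.
have Lc := L2_comb s c.
by rewrite comb_cons innerDMl // IH big_cons addrC.
Qed.

Lemma inner_combr s c h : L2 mu h ->
  inner mu h (comb s c) = \sum_(i <- s) conjc (c i) * inner mu h (e i).
Proof.
move=> hh; rewrite (inner_conjC (L2_comb s c) hh) inner_combl // rmorph_sum.
by apply: eq_bigr => i _; rewrite rmorphM (inner_conjC (L2e i) hh).
Qed.

Lemma inner_comb s c c' : uniq s -> orthonormal_on s ->
  inner mu (comb s c) (comb s c') = \sum_(i <- s) c i * conjc (c' i).
Proof.
move=> us ON; rewrite (inner_combl s c (L2_comb s c')).
apply: eq_big_seq => i iS; congr (_ * _).
rewrite (inner_combr s c' (L2e i)) (bigD1_seq i iS us) /= ON // eqxx mulr1 big1_seq ?addr0 //.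
by move=> j /andP[ji jS]; rewrite ON // eq_sym (negbTE ji) mulr0.
Qed.

(* Expand the square and complete it in each coefficient. *)
Lemma sqnorm_sub_comb h s c : L2 mu h -> uniq s -> orthonormal_on s ->
  sqnorm mu (fun x => h x - comb s c x) =
  sqnorm mu h + \sum_(i <- s) (csq (inner mu h (e i) - c i) - csq (inner mu h (e i))).
Proof.
move=> hh us ON.
have -> : (fun x => h x - comb s c x) = (fun x => h x + (-1) * comb s c x).
  by apply/funext => x; rewrite mulN1r.
have hS := L2_comb s c; have hD := L2_addM (-1) hh hS.
rewrite -[LHS]/(cre ((sqnorm mu _)%:C%C)) -inner_self //.
rewrite (innerDMl (-1) hh hS hD) (innerDMr (-1) hh hS hh) (innerDMr (-1) hh hS hS).
rewrite inner_self // inner_comb // (inner_combr s c hh) (inner_combl s c hh) rmorphN1.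
rewrite [\sum_(i <- s) c i * inner mu (e i) h]
  (eq_big_seq (fun i => c i * conjc (inner mu h (e i)))); last first.
  by move=> i _; rewrite (inner_conjC hh (L2e i)).
rewrite !mulN1r opprD opprK -!sumrN -!addrA -!big_split creD cre_sum.
congr (_ + _); apply: eq_bigr => i _.
by move: (inner mu h (e i)) (c i) => [? ?] [? ?]; rewrite /csq /cre /cim /=; ring.
Qed.

Lemma bessel h s : L2 mu h -> uniq s -> orthonormal_on s ->
  \sum_(i <- s) csq (inner mu h (e i)) <= sqnorm mu h.
Proof.
move=> hh us ON.
have := sqnorm_ge0 mu (fun x => h x - comb s (fun i => inner mu h (e i)) x).
rewrite sqnorm_sub_comb //.
under eq_bigr do rewrite subrr /csq /= expr0n /= addr0 add0r.
by rewrite sumrN subr_ge0.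
Qed.

Lemma sqnorm_comb s c : uniq s -> orthonormal_on s ->
  sqnorm mu (comb s c) = \sum_(i <- s) csq (c i).
Proof.
move=> us ON.
have := sqnorm_sub_comb c (L2_0 mu) us ON.
rewrite sqnorm0 add0r (_ : (fun x => 0 - comb s c x) = (fun x => - comb s c x)).
  rewrite sqnormN => ->; apply: eq_bigr => i _.
  by rewrite inner0l sub0r csqN /csq /= expr0n /= addr0 subr0.
by apply/funext => x; rewrite sub0r.
Qed.

(* Both sides reduce to coefficient sums by Parseval, and the right one
   dominates [sum |c i - <h, e i>|^2] by Bessel. *)
Lemma sqnorm_sub_comb_unimodular_le h s c w : L2 mu h -> uniq s -> orthonormal_on s ->
  (forall i, csq (w i) = 1) ->
  sqnorm mu (fun x => comb s (fun i => w i * c i) x -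
                      comb s (fun i => w i * inner mu h (e i)) x)
  <= sqnorm mu (fun x => h x - comb s c x).
Proof.
move=> hh us ON w1; rewrite comb_sub sqnorm_comb //.
under eq_bigr do rewrite -mulrBr csqM w1 mul1r -csqN opprB.
by rewrite sqnorm_sub_comb // sumrB addrCA lerDl subr_ge0 bessel.
Qed.

End FiniteCombinations.

Section BohrTranslation.
Context (R : realType) (n : nat).
Implicit Types (a x : n.-tuple R) (F : bohr R n -> R[i]).

Lemma measurable_bval_re x : measurable_fun setT (fun chi : bohr R n => cre (bval chi x)).
Proof.
move=> _ B mB; rewrite setTI; apply: sub_gen_smallest.
by exists x, B; split => //; left.
Qed.

Lemma measurable_bval_im x : measurable_fun setT (fun chi : bohr R n => cim (bval chi x)).
Proof.
move=> _ B mB; rewrite setTI; apply: sub_gen_smallest.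
by exists x, B; split => //; right.
Qed.

Lemma measurable_bohr_shift a : measurable_fun setT (bohr_shift a).
Proof.
apply: (@measurability _ _ _ _ setT (bohr_shift a) (@bohr_gen R n)) => //.
have mre := measurable_bval_re; have mim := measurable_bval_im.
move=> _ [_ [x [B [mB [->|->]]]] <-].
- suff : measurable_fun setT (fun chi : bohr R n => cre (echar a x * bval chi x)).
    by move=> mf; exact: (mf measurableT B mB).
  rewrite (_ : (fun chi => _) = (fun chi => cre (echar a x) * cre (bval chi x)
                                           - cim (echar a x) * cim (bval chi x))).
    by apply: measurable_funB; apply: measurable_funM.
  by apply/funext => chi; case: (echar a x) => ? ?; case: (bval chi x).
- suff : measurable_fun setT (fun chi : bohr R n => cim (echar a x * bval chi x)).
    by move=> mf; exact: (mf measurableT B mB).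
  rewrite (_ : (fun chi => _) = (fun chi => cre (echar a x) * cim (bval chi x)
                                           + cim (echar a x) * cre (bval chi x))).
    by apply: measurable_funD; apply: measurable_funM.
  apply/funext => chi; case: (echar a x) => ? ?; case: (bval chi x) => ? ? /=.
  by rewrite /cim /=; ring.
Qed.

Lemma cmeasurable_bohr_shift a F : cmeasurable F ->
  cmeasurable (fun chi => F (bohr_shift a chi)).
Proof.
by case=> m1 m2; split; [exact: measurableT_comp m1 (measurable_bohr_shift a)
                        |exact: measurableT_comp m2 (measurable_bohr_shift a)].
Qed.

Variable mub : probability (bohr R n) R.
Hypothesis haar : is_haar mub.

(* The shift by [a] is multiplication by the character [echar a], an element
   of the Bohr group. *)
Lemma haar_bohr_shift a (A : set (bohr R n)) : measurable A ->
  mub (bohr_shift a @^-1` A) = mub A.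
Proof. exact: (haar (Bohr (is_char_echar a))). Qed.

Lemma ae_eq_bohr_shift a F G : F = G %[ae mub] ->
  (fun chi => F (bohr_shift a chi)) = (fun chi => G (bohr_shift a chi)) %[ae mub].
Proof.
case=> N [mN N0 FG]; exists (bohr_shift a @^-1` N); split.
- by rewrite -[X in measurable X]setTI; exact: measurable_bohr_shift.
- by rewrite haar_bohr_shift.
- by move=> chi /= FGchi; apply: FG => /= h; apply: FGchi => _; exact: h.
Qed.

Lemma ge0_integral_bohr_shift a (F : bohr R n -> \bar R) : measurable_fun setT F ->
  (forall chi, (0 <= F chi)%E) ->
  (\int[mub]_chi F (bohr_shift a chi) = \int[mub]_chi F chi)%E.
Proof.
move=> mF F0; have ms := measurable_bohr_shift a.
rewrite (@eq_measure_integral _ _ _ setT (pushforward mub (bohr_shift a)) mub F).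
  by rewrite (ge0_integral_pushforward ms).
by move=> A mA _; symmetry; exact: haar_bohr_shift.
Qed.

Lemma sqnorm_bohr_shift a F : cmeasurable F ->
  sqnorm mub (fun chi => F (bohr_shift a chi)) = sqnorm mub F.
Proof.
move=> mF; rewrite /sqnorm /Rintegral.
rewrite (ge0_integral_bohr_shift a (F := fun chi => (csq (F chi))%:E)) //.
  exact: measurable_EFin_csq.
by move=> chi; rewrite lee_fin csq_ge0.
Qed.

Lemma L2_bohr_shift a F : L2 mub F -> L2 mub (fun chi => F (bohr_shift a chi)).
Proof.
move=> [mF IF]; split; first exact: cmeasurable_bohr_shift.
rewrite (ge0_integral_bohr_shift a (F := fun chi => (csq (F chi))%:E)) //.
  exact: measurable_EFin_csq.
by move=> chi; rewrite lee_fin csq_ge0.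
Qed.

End BohrTranslation.

Section Characters.
Context (R : realType) (n : nat).
Implicit Types (l x : n.-tuple R).

Lemma measurable_dotp l : measurable_fun setT (dotp l).
Proof.
apply: measurable_sum => i; apply: measurable_funM => //.
exact: measurable_tnth.
Qed.

Lemma cmeasurable_echar l : cmeasurable (echar l).
Proof.
have m2 : measurable_fun setT (fun x => 2 * pi * dotp l x).
  by apply: measurable_funM => //; exact: measurable_dotp.
split; apply: measurableT_comp m2; apply: continuous_measurable_fun.
- exact: continuous_cos.
- exact: continuous_sin.
Qed.

Lemma L2_echar (mu : probability (n.-tuple R) R) l : L2 mu (echar l).
Proof.
split; first exact: cmeasurable_echar.
rewrite (eq_integral (fun _ => 1%E)); last by move=> x _; rewrite csq_echar.
by rewrite integral_cst // mul1e (le_lt_trans (probability_le1 mu measurableT)) ?ltry.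
Qed.

Lemma lincomb_comb (t : seq (n.-tuple R * R[i])) (s : seq (n.-tuple R)) :
  uniq s -> (forall p, p \in t -> p.1 \in s) ->
  lincomb t = comb (@echar R n) s (fun l => \sum_(p <- t | p.1 == l) p.2).
Proof.
move=> us ts; apply/funext => x; rewrite /lincomb /comb.
under [RHS]eq_bigr do rewrite mulr_suml big_mkcond.
rewrite exchange_big /=; apply: eq_big_seq => p pt.
rewrite (bigD1_seq p.1 (ts p pt) us) /= eqxx big1_seq ?addr0 // => l /andP[lp _].
by rewrite eq_sym (negbTE lp).
Qed.

End Characters.

Section Isometry.
Context (R : realType) (n : nat) (mu : probability (n.-tuple R) R)
  (mub : probability (bohr R n) R) (Lam : set (n.-tuple R))
  (W : (n.-tuple R -> R[i]) -> (bohr R n -> R[i])).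
Hypothesis hW : is_W mu mub Lam W.
Implicit Types (f g h : n.-tuple R -> R[i]).

Lemma L2_W h : L2 mu h -> L2 mub (W h).
Proof. by case: hW => L2W _ _ _ _; exact: L2W. Qed.

Lemma W_sub f g : L2 mu f -> L2 mu g ->
  W (fun x => f x - g x) = (fun chi => W f chi - W g chi) %[ae mub].
Proof.
case: hW => _ _ linW _ _ hf hg; have := linW f g (-1) hf hg.
rewrite (_ : (fun x => f x + -1 * g x) = (fun x => f x - g x)); last first.
  by apply/funext => x; rewrite mulN1r.
by apply: filterS => chi h /h ->; rewrite mulN1r.
Qed.

Lemma W0 : W (fun _ => 0) = (fun _ => 0) %[ae mub].
Proof.
have := W_sub (L2_0 mu) (L2_0 mu).
rewrite (_ : (fun _ => 0 - 0) = (fun _ => 0)); last by apply/funext => x; rewrite subrr.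
by apply: filterS => chi h /h ->; rewrite subrr.
Qed.

Lemma W_comb s c : (forall l, l \in s -> Lam l) ->
  W (comb (@echar R n) s c) = (fun chi => \sum_(l <- s) c l * etilde l chi) %[ae mub].
Proof.
case: hW => _ _ linW _ We; elim: s => [|l s IH] sLam.
  by rewrite comb_nil; apply: filterS W0 => chi h /h ->; rewrite big_nil.
have := linW _ (echar l) (c l) (L2_comb (L2_echar mu) s c) (L2_echar mu l).
rewrite comb_cons; apply: filterS3 (IH _) (We l (sLam l (mem_head _ _))).
- by move=> chi e1 e2 e3 Tchi; rewrite e3 // e1 // e2 // big_cons addrC.
- by move=> j js; apply: sLam; rewrite inE js orbT.
Qed.

Lemma sqnorm_W h : L2 mu h -> sqnorm mub (W h) = sqnorm mu h.
Proof.
case: hW => _ _ _ normW _ hh; have := normW h hh.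
rewrite !l2normE => /(congr1 (fun z => z ^+ 2)).
by rewrite !sqr_sqrtr // sqnorm_ge0.
Qed.

Lemma sqnorm_W_sub f g : L2 mu f -> L2 mu g ->
  sqnorm mub (fun chi => W f chi - W g chi) = sqnorm mu (fun x => f x - g x).
Proof.
move=> hf hg; have hfg := L2_sub hf hg.
rewrite -sqnorm_W // (eq_sqnorm_ae _ _ (ae_eq_sym (W_sub hf hg))) //.
- exact: (L2_sub (L2_W hf) (L2_W hg)).1.
- exact: (L2_W hfg).1.
Qed.

End Isometry.

Section LocalTranslation.
Context (R : realType) (n : nat) (mu : probability (n.-tuple R) R)
  (Lam : set (n.-tuple R)) (mub : probability (bohr R n) R)
  (W : (n.-tuple R -> R[i]) -> (bohr R n -> R[i])).
Hypotheses (haar : is_haar mub) (spec : spectral mu Lam) (hW : is_W mu mub Lam W).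
Variables (a : n.-tuple R) (f : n.-tuple R -> R[i]).
Hypothesis hf : L2 mu f.

Local Notation ecomb := (comb (@echar R n)).
Definition transl_coef l := echar a l * inner mu f (echar l).

(* Density of the span and the definition of [U_Lam(a) f] give two finite
   supports; their union serves for both approximations. *)
Lemma approx_common_support g : is_local_transl mu Lam a f g ->
  forall e, 0 < e -> exists s c, [/\ uniq s, (forall l, l \in s -> Lam l),
    sqnorm mu (fun x => f x - ecomb s c x) < e &
    sqnorm mu (fun x => g x - ecomb s transl_coef x) < e].
Proof.
move=> [_ hloc] e e0; have eps0 : 0 < Num.sqrt e by rewrite sqrtr_gt0.
have [t [tLam ft]] := spec.2 f hf _ eps0.
have [s0 [s0Lam gs0]] := hloc _ eps0.
pose s := undup (s0 ++ map fst t).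
have sLam l : l \in s -> Lam l.
  by rewrite mem_undup mem_cat => /orP[/s0Lam|/mapP[p /tLam ? ->]].
have ts p : p \in t -> p.1 \in s.
  by move=> pt; rewrite mem_undup mem_cat map_f ?orbT.
exists s, (fun l => \sum_(p <- t | p.1 == l) p.2); split => //.
- exact: undup_uniq.
- by apply: sqnorm_lt_of_l2norm; rewrite // -lincomb_comb ?undup_uniq.
- apply: sqnorm_lt_of_l2norm; rewrite //.
  by apply: gs0 => [|//|l ls0]; rewrite ?undup_uniq // mem_undup mem_cat ls0.
Qed.

(* [W] intertwines the translations on finite combinations of characters,
   because [etilde l (a . chi) = echar a l * etilde l chi]. *)
Lemma W_comb_shift s c : (forall l, l \in s -> Lam l) ->
  U_bohr a (W (ecomb s c)) =
  W (ecomb s (fun l => echar a l * c l)) %[ae mub].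
Proof.
move=> sLam; apply: filterS2 (ae_eq_bohr_shift haar a (W_comb hW c sLam))
  (W_comb hW (fun l => echar a l * c l) sLam) => chi e1 e2 Tchi.
rewrite /U_bohr e1 // e2 //; apply: eq_bigr => l _; rewrite /etilde /=; ring.
Qed.

Lemma sqnorm_defect_le g s c : L2 mu g -> uniq s -> (forall l, l \in s -> Lam l) ->
  sqnorm mub (fun chi => U_bohr a (W f) chi - W g chi) <=
  8 * (2 * sqnorm mu (fun x => f x - ecomb s c x) +
       sqnorm mu (fun x => g x - ecomb s transl_coef x)).
Proof.
move=> hg us sLam.
have Le := L2_echar mu; have Lc := L2_comb Le s.
have LW := L2_W hW; have LWsh h (hh : L2 mu h) := L2_bohr_shift haar a (LW h hh).
pose Tc := ecomb s c; pose Ta := ecomb s (fun l => echar a l * c l).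
pose Gs := ecomb s transl_coef.
have ON : orthonormal_on mu (@echar R n) s by move=> *; apply: spec.1; exact: sLam.
have -> : (fun chi => U_bohr a (W f) chi - W g chi) = (fun chi =>
    (U_bohr a (W f) chi - U_bohr a (W Tc) chi) + (U_bohr a (W Tc) chi - W Ta chi)
    + (W Ta chi - W Gs chi) + (W Gs chi - W g chi)).
  by apply/funext => chi; ring.
apply: le_trans (sqnormD4_le (L2_sub (LWsh _ hf) (LWsh _ (Lc c))) _ _ _) _.
- exact: L2_sub (LWsh _ (Lc c)) (LW _ (Lc _)).
- exact: L2_sub (LW _ (Lc _)) (LW _ (Lc _)).
- exact: L2_sub (LW _ (Lc _)) (LW _ hg).
have -> : sqnorm mub (fun chi => U_bohr a (W Tc) chi - W Ta chi) = 0.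
  rewrite -(sqnorm0 mub); apply: eq_sqnorm_ae.
  - exact: (L2_sub (LWsh _ (Lc c)) (LW _ (Lc _))).1.
  - by split; exact: measurable_cst.
  by apply: filterS (W_comb_shift c sLam) => chi h /h ->; rewrite subrr.
rewrite (sqnorm_bohr_shift haar a (F := fun chi => W f chi - W Tc chi)).
  2: exact: (L2_sub (LW _ hf) (LW _ (Lc c))).1.
rewrite !(sqnorm_W_sub hW) //; try exact: Lc.
rewrite (sqnorm_subC mu Gs).
have : sqnorm mu (fun x => Ta x - Gs x) <= sqnorm mu (fun x => f x - Tc x).
  exact (sqnorm_sub_comb_unimodular_le Le c hf us ON (csq_echar a)).
lra.
Qed.

End LocalTranslation.

Theorem theorem4p11 (R : realType) (n : nat)
    (mu : probability (n.-tuple R) R) (Lam : set (n.-tuple R))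
    (mub : probability (bohr R n) R)
    (W : (n.-tuple R -> R[i]) -> (bohr R n -> R[i])) :
  is_haar mub ->
  spectral mu Lam ->
  is_W mu mub Lam W ->
  forall (a : n.-tuple R) (f g : n.-tuple R -> R[i]),
    L2 mu f -> is_local_transl mu Lam a f g ->
    U_bohr a (W f) = W g %[ae mub].
Proof.
move=> haar spec hW a f g hf hloc; have hg := hloc.1.
have LD : L2 mub (fun chi => U_bohr a (W f) chi - W g chi).
  exact: L2_sub (L2_bohr_shift haar a (L2_W hW hf)) (L2_W hW hg).
suff /(sqnorm_eq0_ae LD) : sqnorm mub (fun chi => U_bohr a (W f) chi - W g chi) = 0.
  by apply: filterS => chi h /h /eqP; rewrite subr_eq0 => /eqP.
apply/eqP; rewrite eq_le sqnorm_ge0 andbT; apply/ler_addgt0Pr => e e0.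
have [s [c [us sLam fs gs]]] :=
  approx_common_support spec hf hloc (divr_gt0 e0 (ltr0n _ 24)).
rewrite add0r; apply: le_trans (sqnorm_defect_le haar spec hW a hf c hg us sLam) _.
lra.
Qed.
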